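(* Let $\mathsf{A}\subset GL_2(\mathbb{R})$. Then $\mathscr{R}(\mathsf{A})=\emptyset$ if and only if $\mathsf{A}$ is strongly conformal.
   Context: $\mathcal{S}(\mathsf{A})$ is the semigroup of finite products of elements of $\mathsf{A}$; $\mathscr{S}(\mathsf{A})=\overline{\mathbb{R}\mathcal{S}(\mathsf{A})}\subset M_2(\mathbb{R})$ (closure of all real multiples of elements of $\mathcal{S}(\mathsf{A})$); $\mathscr{R}(\mathsf{A})=\{A\in\mathscr{S}(\mathsf{A}):\operatorname{rank}(A)=1\}$. A set is strongly conformal if there is a single invertible $M$ with $|\det A|^{-1/2}MAM^{-1}\in O(2)$ for all $A$ in the set. *)

From HB Require Import structures.
From mathcomp Require Import all_boot all_order all_algebra.
From mathcomp Require Import all_classical all_reals topology.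
Import numFieldTopology.Exports.
Set Implicit Arguments. Unset Strict Implicit. Unset Printing Implicit Defensive.
Import Order.TTheory GRing.Theory Num.Theory.
Local Open Scope classical_set_scope.
Local Open Scope ring_scope.

Section Defs.
Variable R : realType.

Definition GL2 : set 'M[R]_2 := [set M | M \in unitmx].

Definition semigroup_of (A : set 'M[R]_2) : set 'M[R]_2 :=
  [set M | exists s : seq 'M[R]_2,
     [/\ s != [::], (forall B, B \in s -> A B) & M = \prod_(B <- s) B]].

Definition scrS (A : set 'M[R]_2) : set 'M[R]_2 :=
  @closure 'M[R]_(2,2) [set (c *: B : 'M[R]_(2,2)) | c in [set: R] & B in semigroup_of A].

Definition scrR (A : set 'M[R]_2) : set 'M[R]_2 :=
  [set M | scrS A M /\ \rank M = 1%N].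

Definition O2 : set 'M[R]_2 := [set Q | Q^T *m Q = 1%:M].

Definition strongly_conformal (A : set 'M[R]_2) : Prop :=
  exists M : 'M[R]_2, M \in unitmx /\
    forall B, A B ->
      O2 ((Num.sqrt `|\det B|)^-1 *: (M *m B *m invmx M)).
End Defs.

From HB Require Import structures.
From mathcomp Require Import all_boot all_order all_algebra.
From mathcomp Require Import all_classical all_reals topology.
From mathcomp Require Import normedtype derive matrix_normedtype.
From mathcomp Require Import ring lra.
Import numFieldTopology.Exports.
Import Order.TTheory GRing.Theory Num.Theory.
Local Open Scope classical_set_scope.
Local Open Scope ring_scope.

(* If M conjugates A into similitudes, then M scrS(A) M^-1 lies in the closed cone
   of similitudes, where a singular element is zero; so scrS(A) has no rank-one element.
   Conversely, if scrS(A) has no rank-one element, |det| has a positive minimum on its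
   compact slice of unit norm, so the normalised monoid G = {g / sqrt|det g|} generated
   by A is bounded, with det = +-1. Among the positive semidefinite forms P satisfying
   g^T P g <= 1 for all g in G, the one of largest determinant is unique by the equality
   case of Minkowski's determinant inequality, hence G-invariant, and its Cholesky
   factor conjugates G into O(2). *)

Lemma ord2P (i : 'I_2) : i = 0 \/ i = 1.
Proof. by case: i => [[|[|//]]] Hi; [left | right]; exact/val_inj. Qed.

Lemma mx2P (T : Type) (X Y : 'M[T]_2) :
  X 0 0 = Y 0 0 -> X 0 1 = Y 0 1 -> X 1 0 = Y 1 0 -> X 1 1 = Y 1 1 -> X = Y.
Proof.
move=> e00 e01 e10 e11; apply/matrixP => i j.
by case: (ord2P i) => ->; case: (ord2P j) => ->.
Qed.

Section Matrix2.
Context {R : comNzRingType}.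
Implicit Types X Y : 'M[R]_2.

Lemma sum_ord2 (F : 'I_2 -> R) : \sum_i F i = F 0 + F 1.
Proof. by rewrite big_ord_recl big_ord1; congr (_ + F _); apply: val_inj. Qed.

Lemma mulmx2E m n (X : 'M[R]_(m, 2)) (Y : 'M[R]_(2, n)) i j :
  (X *m Y) i j = X i 0 * Y 0 j + X i 1 * Y 1 j.
Proof. by rewrite mxE sum_ord2. Qed.

Lemma det_mx2 X : \det X = X 0 0 * X 1 1 - X 0 1 * X 1 0.
Proof.
rewrite (expand_det_row _ 0) sum_ord2 /cofactor !det_mx11 !mxE /=.
have -> : lift 0 (0 : 'I_1) = 1 :> 'I_2 by apply: val_inj.
have -> : lift 1 (0 : 'I_1) = 0 :> 'I_2 by apply: val_inj.
by rewrite /= expr0 expr1; ring.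
Qed.

End Matrix2.

Lemma rank_mx2_eq1 (F : fieldType) (X : 'M[F]_2) :
  \rank X = 1%N <-> X != 0 /\ \det X = 0.
Proof.
have unitX : X \in unitmx = (\rank X == 2%N) by rewrite -row_free_unit.
split=> [rX1 | [X0 dX0]].
  split; first by rewrite -mxrank_eq0 rX1.
  have : X \notin unitmx by rewrite unitX rX1.
  by rewrite unitmxE unitfE negbK => /eqP.
have := rank_leq_row X; rewrite -mxrank_eq0 in X0.
move: unitX; rewrite unitmxE unitfE dX0 eqxx => /esym/negbT.
by case: (\rank X) X0 => [|[|[|]]].
Qed.

Lemma trmx_mulmx_eq0 (R : realDomainType) (Y : 'M[R]_2) : Y^T *m Y = 0 -> Y = 0.
Proof.
move=> YY0; have col0 j : Y 0 j = 0 /\ Y 1 j = 0.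
  have := congr1 (fun Z : 'M[R]_2 => Z j j) YY0; rewrite mulmx2E !mxE.
  by move=> h; split; nra.
by apply: mx2P; rewrite mxE;
  [case: (col0 0) | case: (col0 1) | case: (col0 0) | case: (col0 1)].
Qed.

Lemma closed_forall_in {T : topologicalType} {I : Type} {D : set I} {F : I -> set T} :
  (forall i, D i -> closed (F i)) -> closed [set x | forall i, D i -> F i x].
Proof. exact: closed_bigI. Qed.

Lemma closed_forall {T : topologicalType} {I : Type} {F : I -> set T} :
  (forall i, closed (F i)) -> closed [set x | forall i, F i x].
Proof.
move=> cF; have -> : [set x | forall i, F i x] = \bigcap_(i in setT) F i.
  by apply/seteqP; split=> x /= Fx i //; apply: Fx.
exact: closed_bigI.
Qed.

Lemma continuous_closed_preimage {T U : topologicalType} {f : T -> U} {D : set U} :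
  continuous f -> closed D -> closed [set x | D (f x)].
Proof. by move=> cf; apply: preimage_closed => x _; apply: cf. Qed.

Section RealContinuity.
Context {R : realType}.

Section Continuity.
Context {T : topologicalType}.

Lemma continuous_add {f g : T -> R} :
  continuous f -> continuous g -> continuous (fun x => f x + g x).
Proof. by move=> cf cg x; apply: (@continuousD _ R^o _ f g x (cf x) (cg x)). Qed.

Lemma continuous_sub {f g : T -> R} :
  continuous f -> continuous g -> continuous (fun x => f x - g x).
Proof. by move=> cf cg x; apply: (@continuousB _ R^o _ f g x (cf x) (cg x)). Qed.

Lemma continuous_mul {f g : T -> R} :
  continuous f -> continuous g -> continuous (fun x => f x * g x).
Proof. by move=> cf cg x; apply: (@continuousM _ _ f g x (cf x) (cg x)). Qed.

Lemma closed_eq_continuous {f g : T -> R} :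
  continuous f -> continuous g -> closed [set x | f x = g x].
Proof.
move=> cf cg; have -> : [set x | f x = g x] = [set x | f x - g x = 0].
  apply/seteqP; split=> x /=; first by move=> ->; rewrite subrr.
  by move/eqP; rewrite subr_eq0 => /eqP.
exact: continuous_closed_preimage (continuous_sub cf cg) (@closed_eq _ 0).
Qed.

Definition mx_continuous (F : T -> 'M[R]_2) := forall i j, continuous (fun x => F x i j).

Lemma mx_continuous_mul {F G} :
  mx_continuous F -> mx_continuous G -> mx_continuous (fun x => F x *m G x).
Proof.
move=> cF cG i j; under eq_fun do rewrite mulmx2E.
by apply: continuous_add; apply: continuous_mul.
Qed.

Lemma mx_continuous_tr {F} : mx_continuous F -> mx_continuous (fun x => (F x)^T).
Proof. by move=> cF i j; under eq_fun do rewrite mxE; apply: cF. Qed.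

Lemma mx_continuous_cst (M : 'M[R]_2) : mx_continuous (fun=> M).
Proof. by move=> i j; apply: cst_continuous. Qed.

End Continuity.

Lemma mx_continuous_id : mx_continuous (fun X : 'M[R]_2 => X).
Proof. by move=> i j; apply: coord_continuous. Qed.

Lemma continuous_det : continuous (fun X : 'M[R]_2 => \det X).
Proof.
under eq_fun do rewrite det_mx2.
by apply: continuous_sub; apply: continuous_mul; apply: coord_continuous.
Qed.

Lemma compact_entry_bounded (r : R) :
  compact [set X : 'M[R]_2 | forall i j, `|X i j| <= r].
Proof.
have vec_mx_continuous : continuous (fun v : 'rV[R]_(2 * 2) => vec_mx v : 'M[R]_2).
  move=> v s /nbhs_ballP [e e0 es]; apply/nbhs_ballP; exists e => // w [_ vw].
  by apply: es; split => // i j; rewrite !mxE; apply: vw.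
have closed_cube : closed [set X : 'M[R]_2 | forall i j, `|X i j| <= r].
  apply: closed_forall => i; apply: closed_forall => j.
  have cont_ij : continuous (fun X : 'M[R]_2 => `|X i j|).
    by move=> X; apply: continuous_comp (@norm_continuous _ R^o _); apply: coord_continuous.
  exact: (continuous_closed_preimage cont_ij (@closed_le _ r)).
have cube_image_compact :
    compact (vec_mx @` [set v : 'rV[R]_(2 * 2) | forall k, `[-r, r]%classic (v 0 k)]).
  apply: continuous_compact; first exact/continuous_subspaceT.
  by apply: (@rV_compact _ _ (fun=> `[-r, r]%classic)) => k; apply: segment_compact.
apply: (subclosed_compact closed_cube cube_image_compact).
move=> X Xr; exists (mxvec X); last by rewrite mxvecK.
by case/mxvec_indexP => i j; rewrite mxvecE /= in_itv /= -ler_norml Xr.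
Qed.

End RealContinuity.

Section Similitude.
Context {R : realDomainType}.
Implicit Types X Y : 'M[R]_2.

Definition similitude Y := exists t, Y^T *m Y = t%:M.

Lemma similitudeM {X Y} : similitude X -> similitude Y -> similitude (X *m Y).
Proof.
move=> [s hs] [t ht]; exists (s * t).
rewrite trmx_mul mulmxA -(mulmxA Y^T) hs -mulmxA mul_scalar_mx.
by rewrite -scalemxAr ht scale_scalar_mx.
Qed.

Lemma similitudeZ c {Y} : similitude Y -> similitude (c *: Y).
Proof.
move=> [t ht]; exists (c * c * t).
by rewrite -scalemxAr [(c *: Y)^T]linearZ -scalemxAl ht !scale_scalar_mx mulrA.
Qed.

Lemma similitude_det0 {Y} : similitude Y -> \det Y = 0 -> Y = 0.
Proof.
move=> [t ht] dY0; apply: trmx_mulmx_eq0; rewrite ht.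
have := congr1 determinant ht; rewrite det_mulmx det_tr dY0 mul0r det_scalar.
by move/esym/eqP; rewrite expf_eq0 /= => /eqP ->; rewrite raddf0.
Qed.

Lemma similitudeE Y :
  similitude Y <-> (Y^T *m Y) 0 1 = 0 /\ (Y^T *m Y) 0 0 = (Y^T *m Y) 1 1.
Proof.
split=> [[t ->] | [e01 e11]]; first by rewrite !mxE.
exists ((Y^T *m Y) 0 0); apply: mx2P; rewrite [RHS]mxE /= ?mulr1n ?mulr0n //.
by rewrite -e01 !mulmx2E !mxE; ring.
Qed.

End Similitude.

Section Semigroup.
Context {R : realType} (A : set 'M[R]_2).

Lemma semigroup_of_ind (Q : 'M[R]_2 -> Prop) :
  (forall B, A B -> Q B) -> (forall X Y, Q X -> Q Y -> Q (X *m Y)) ->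
  semigroup_of A `<=` Q.
Proof.
move=> QA QM _ [s [+ + ->]]; elim: s => [//|B [|B' s] IH] _ sA.
  by rewrite big_seq1; apply/QA/sA; rewrite mem_head.
rewrite big_cons; apply: QM; first by apply/QA/sA; rewrite mem_head.
by apply: IH => // C sC; apply: sA; rewrite in_cons sC orbT.
Qed.

Lemma semigroup_ofM X Y :
  semigroup_of A X -> semigroup_of A Y -> semigroup_of A (X *m Y).
Proof.
move=> [s [s0 sA ->]] [t [_ tA ->]]; exists (s ++ t); split.
- by case: s s0 {sA}.
- by move=> B; rewrite mem_cat => /orP[]; [apply: sA | apply: tA].
- by rewrite big_cat.
Qed.

Lemma sub_semigroup_of : A `<=` semigroup_of A.
Proof.
move=> B AB; exists [:: B]; split => //; last by rewrite big_seq1.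
by move=> C; rewrite mem_seq1 => /eqP ->.
Qed.

Lemma semigroup_of_GL2 : A `<=` @GL2 R -> semigroup_of A `<=` @GL2 R.
Proof.
move=> AG; apply: semigroup_of_ind => // X Y.
by rewrite /GL2 /= unitmx_mul => -> ->.
Qed.

Definition monoid_of := [set B | B = 1%:M \/ semigroup_of A B].

Lemma monoid_ofM X Y : monoid_of X -> monoid_of Y -> monoid_of (X *m Y).
Proof.
case=> [-> | SX]; first by rewrite mul1mx.
by case=> [-> | SY]; [rewrite mulmx1; right | right; apply: semigroup_ofM].
Qed.

Lemma monoid_of_GL2 : A `<=` @GL2 R -> monoid_of `<=` @GL2 R.
Proof. by move=> AG X [-> | /(semigroup_of_GL2 AG)]; rewrite // /GL2 /= unitmx1. Qed.

End Semigroup.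

Arguments semigroup_of_GL2 {R A}.
Arguments monoid_of_GL2 {R A}.

Section StronglyConformal.
Context {R : realType}.
Implicit Types (A : set 'M[R]_2) (M X Y : 'M[R]_2).

Lemma similitude_of_O2Z c Y : O2 (c *: Y) -> similitude Y.
Proof.
move=> cYO2; have c0 : c != 0.
  apply/eqP=> c0; move: cYO2; rewrite c0 scale0r /O2 /= mulmx0.
  by move/matrixP/(_ 0 0)/eqP; rewrite !mxE eq_sym oner_eq0.
by rewrite -[Y](scalerK c0); apply/similitudeZ; exists 1.
Qed.

Lemma closed_similitude_conj M Y : closed [set X | similitude (M *m X *m Y)].
Proof.
have cMXY : mx_continuous (fun X => M *m X *m Y).
  exact: mx_continuous_mul (mx_continuous_mul (mx_continuous_cst M) mx_continuous_id)
                           (mx_continuous_cst Y).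
have cF := mx_continuous_mul (mx_continuous_tr cMXY) cMXY.
set F := fun X => _ in cF.
have -> : [set X | similitude (M *m X *m Y)] =
    [set X | F X 0 1 = 0] `&` [set X | F X 0 0 - F X 1 1 = 0].
  apply/seteqP; split=> X /=; first by move/similitudeE => [-> ->]; rewrite subrr.
  by move=> [e01 /eqP]; rewrite subr_eq0 => /eqP e; apply/similitudeE.
apply: closedI; apply: continuous_closed_preimage (@closed_eq _ 0) => //.
exact: continuous_sub.
Qed.

Lemma scrS_similitude_conj {A M} : M \in unitmx ->
    (forall B, A B -> similitude (M *m B *m invmx M)) ->
  scrS A `<=` [set X | similitude (M *m X *m invmx M)].
Proof.
move=> Mu simA; have /closure_id -> := closed_similitude_conj M (invmx M).
apply: closureS => _ [c _ [B SB <-]] /=.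
rewrite -scalemxAr -scalemxAl; apply: similitudeZ; move: B SB.
apply: semigroup_of_ind => // X Y simX simY.
have -> : M *m (X *m Y) *m invmx M = (M *m X *m invmx M) *m (M *m Y *m invmx M).
  by rewrite !mulmxA mulmxKV.
exact: similitudeM.
Qed.

Lemma strongly_conformal_scrR0 A : strongly_conformal A -> scrR A = set0.
Proof.
move=> [M [Mu MA]]; apply/seteqP; split=> // X [SX /rank_mx2_eq1 [X0 dX0]].
have simA B : A B -> similitude (M *m B *m invmx M).
  by move=> AB; apply: similitude_of_O2Z (MA B AB).
have /similitude_det0 := scrS_similitude_conj Mu simA X SX.
rewrite !det_mulmx dX0 mulr0 mul0r => /(_ erefl) MXM0.
move/eqP: X0; apply; rewrite -(mulKmx Mu X) -(mulmxKV Mu (M *m X)) MXM0.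
by rewrite mul0mx mulmx0.
Qed.

End StronglyConformal.

Section ConeBound.
Context {R : realType}.

Lemma entry_le_mx_norm (X : 'M[R]_2) i j : `|X i j| <= `|X|.
Proof.
rewrite [leRHS]/Num.norm /= mx_normrE; apply/bigmax_geP; right => /=.
by exists (i, j).
Qed.

Lemma cone_entry_bound (S : set 'M[R]_2) :
    (forall c X, S X -> S (c *: X)) -> (forall X, closure S X -> \rank X != 1%N) ->
  exists K, forall X, S X -> forall i j, X i j ^+ 2 <= K * `|\det X|.
Proof.
move=> coneS noR1; set U := closure S `&` [set X | `|X| = 1].
have compactU : compact U.
  apply: (subclosed_compact _ (compact_entry_bounded 1)); last first.
    by move=> X [_ X1] i j; rewrite -X1 entry_le_mx_norm.
  apply: closedI; first exact: closed_closure.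
  exact: continuous_closed_preimage norm_continuous (@closed_eq _ 1).
have [d d0 Ud] : exists2 d : R, 0 < d & forall X, U X -> d <= `|\det X|.
  have [[X0 UX0] | U0] := pselect (U !=set0); last first.
    by exists 1 => // X UX; exfalso; apply: U0; exists X.
  have absdet_cont : continuous (fun X : 'M[R]_2 => `|\det X|).
    by move=> X; apply: continuous_comp (@norm_continuous _ R^o _); apply: continuous_det.
  have [Y UY Ymin] := compact_EVT_min (ex_intro _ X0 UX0) compactU
    (continuous_subspaceT absdet_cont).
  exists `|\det Y|; last by move=> X UX; apply: Ymin; rewrite inE.
  move: UY; rewrite inE => -[SY Y1]; rewrite normr_gt0; apply: contra (noR1 Y SY) => dY0.
  apply/eqP/rank_mx2_eq1; split; last exact/eqP.
  by apply/eqP => Y0; move/eqP: Y1; rewrite Y0 normr0 eq_sym oner_eq0.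
exists d^-1 => X SX i j.
have [-> | X0] := eqVneq X 0; first by rewrite mxE expr0n det0 normr0 mulr0.
have nX0 : 0 < `|X| by rewrite normr_gt0.
have UX : U (`|X|^-1 *: X).
  split; first by apply: subset_closure; apply: coneS.
  by rewrite /= normrZ normfV normr_id mulVf // gt_eqF.
have := Ud _ UX; rewrite detZ normrM normrX normfV normr_id exprVn.
rewrite ler_pdivlMl ?exprn_gt0 // mulrC -ler_pdivlMl // => nX2.
apply: le_trans nX2; rewrite -[X i j ^+ 2]real_normK ?num_real //.
by rewrite lerXn2r ?nnegrE ?normr_ge0 // entry_le_mx_norm.
Qed.

End ConeBound.

Section PositiveDefinite.
Context {R : realFieldType}.
Implicit Types P Q : 'M[R]_2.

Definition pos_def2 P := [/\ P 0 1 = P 1 0, 0 < P 0 0 & 0 < \det P].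

Lemma det_midpoint_le_eq P Q : pos_def2 P -> pos_def2 Q ->
  \det Q = \det P -> \det (2^-1 *: (P + Q)) <= \det P -> P = Q.
Proof.
move=> [sP aP dP] [sQ aQ _] dQP.
rewrite detZ expr2 -invfM ler_pdivrMl ?mulr_gt0 //.
move: dP dQP; rewrite !det_mx2 !mxE -sP -sQ.
set a := P 0 0; set b := P 0 1; set c := P 1 1.
set a' := Q 0 0; set b' := Q 0 1; set c' := Q 1 1.
set d := a * c - b * b; set e := a' * c' - b' * b' => dP ed dPQ.
(* When [d = e] the right-hand side is [d * (a - a') ^+ 2 + (a' * b - a * b') ^+ 2]. *)
have key : a * a' * ((a + a') * (c + c') - (b + b') * (b + b') - 2 * d - 2 * e) =
    e * a ^+ 2 + d * a' ^+ 2 - (d + e) * a * a' + (a' * b - a * b') ^+ 2.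
  by rewrite /d /e; ring.
have sq0 : d * (a - a') ^+ 2 + (a' * b - a * b') ^+ 2 <= 0.
  have -> : d * (a - a') ^+ 2 + (a' * b - a * b') ^+ 2 =
      a * a' * ((a + a') * (c + c') - (b + b') * (b + b') - 2 * d - 2 * e).
    by rewrite key ed; ring.
  by apply: mulr_ge0_le0; [rewrite mulr_ge0 ?ltW | rewrite ed; lra].
have h1 : 0 <= d * (a - a') ^+ 2 by rewrite mulr_ge0 ?sqr_ge0 ?ltW.
have h2 : 0 <= (a' * b - a * b') ^+ 2 by rewrite sqr_ge0.
have ea : a = a'.
  have /eqP : d * (a - a') ^+ 2 = 0 by lra.
  by rewrite mulf_eq0 gt_eqF //= sqrf_eq0 subr_eq0 => /eqP.
have eb : b = b'.
  have /eqP : (a' * b - a * b') ^+ 2 = 0 by lra.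
  by rewrite sqrf_eq0 -ea -mulrBr mulf_eq0 gt_eqF //= subr_eq0 => /eqP.
have ec : c = c'.
  by apply: (mulfI (lt0r_neq0 aP)); move: ed; rewrite /d /e -ea -eb -/a; lra.
by apply: (@mx2P _ P Q); rewrite -?sP -?sQ.
Qed.

End PositiveDefinite.

Lemma cholesky2 {R : rcfType} {P : 'M[R]_2} :
  pos_def2 P -> exists M : 'M[R]_2, M \in unitmx /\ M^T *m M = P.
Proof.
move=> [sP aP dP]; set a := P 0 0; set r := Num.sqrt a; set s := Num.sqrt (\det P / a).
have r0 : 0 < r by rewrite sqrtr_gt0.
have s0 : 0 < s by rewrite sqrtr_gt0 divr_gt0.
have rr : r ^+ 2 = a by rewrite sqr_sqrtr // ltW.
have ss : s ^+ 2 = \det P / a by rewrite sqr_sqrtr // ltW // divr_gt0.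
exists (\matrix_(i, j) if i == 0 then (if j == 0 then r else P 0 1 / r)
                      else (if j == 0 then 0 else s)).
split.
  by rewrite unitmxE unitfE det_mx2 !mxE /= mulr0 subr0 mulf_neq0 // gt_eqF.
have r_neq0 : r != 0 by rewrite gt_eqF.
apply: mx2P; rewrite mulmx2E !mxE /= ?mulr0 ?mul0r ?addr0.
- by rewrite -expr2 rr.
- by rewrite mulrCA divff // mulr1.
- by rewrite divfK // sP.
- rewrite -!expr2 expr_div_n rr ss det_mx2 -sP -/a.
  by field; rewrite gt_eqF.
Qed.

Section QuadraticForm.
Context {R : realFieldType}.
Implicit Types (P Q g : 'M[R]_2) (x : 'rV[R]_2).

Definition qform P x := (x *m P *m x^T) 0 0.

Lemma qformE P x : qform P x =
  x 0 0 ^+ 2 * P 0 0 + x 0 0 * x 0 1 * (P 0 1 + P 1 0) + x 0 1 ^+ 2 * P 1 1.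
Proof. by rewrite /qform !mulmx2E !mxE; ring. Qed.

Definition row2 (a b : R) : 'rV[R]_2 := \row_j (if j == 0 then a else b).

Lemma qform_row2 P a b :
  qform P (row2 a b) = a ^+ 2 * P 0 0 + a * b * (P 0 1 + P 1 0) + b ^+ 2 * P 1 1.
Proof. by rewrite qformE !mxE. Qed.

Lemma qformD P Q x : qform (P + Q) x = qform P x + qform Q x.
Proof. by rewrite /qform mulmxDr mulmxDl mxE. Qed.

Lemma qformZ c P x : qform (c *: P) x = c * qform P x.
Proof. by rewrite /qform -scalemxAr -scalemxAl mxE. Qed.

Lemma qform_conj g P x : qform (g^T *m P *m g) x = qform P (x *m g^T).
Proof. by rewrite /qform trmx_mul trmxK !mulmxA. Qed.

Lemma qform1_mul_le (L : R) g x : (forall i j, g i j ^+ 2 <= L) ->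
  qform 1%:M (x *m g^T) <= 4 * L * qform 1%:M x.
Proof.
move=> gL; rewrite !qformE !mulmx2E !mxE /= addr0 !mulr0 !addr0 !mulr1.
have sqrD_le (p q : R) : (p + q) ^+ 2 <= 2 * (p ^+ 2 + q ^+ 2).
  by rewrite -subr_ge0 (_ : _ - _ = (p - q) ^+ 2) ?sqr_ge0 //; ring.
have termL y i j : (y * g i j) ^+ 2 <= y ^+ 2 * L.
  by rewrite exprMn ler_wpM2l ?sqr_ge0.
have := sqrD_le (x 0 0 * g 0 0) (x 0 1 * g 0 1).
have := sqrD_le (x 0 0 * g 1 0) (x 0 1 * g 1 1).
move: (termL (x 0 0) 0 0) (termL (x 0 1) 0 1) (termL (x 0 0) 1 0) (termL (x 0 1) 1 1).
nra.
Qed.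

End QuadraticForm.

Lemma continuous_qform {R : realType} (x : 'rV[R]_2) :
  continuous (fun P : 'M[R]_2 => qform P x).
Proof.
under eq_fun do rewrite qformE.
have cst (c : R) : continuous (fun _ : 'M[R]_2 => c) by exact: cst_continuous.
apply: continuous_add; first apply: continuous_add.
- by apply: continuous_mul (cst _) _; apply: coord_continuous.
- by apply: continuous_mul (cst _) _; apply: continuous_add; apply: coord_continuous.
- by apply: continuous_mul (cst _) _; apply: coord_continuous.
Qed.

Section InvariantForm.
Context {R : realType}.
Variables (G : set 'M[R]_2) (L : R).
Hypothesis G1 : G 1%:M.
Hypothesis GM : forall g h, G g -> G h -> G (g *m h).
Hypothesis G_det : forall g, G g -> \det g ^+ 2 = 1.
Hypothesis G_bounded : forall g, G g -> forall i j, g i j ^+ 2 <= L.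
Implicit Types P Q : 'M[R]_2.

(* [P] is symmetric positive semidefinite and [g^T P g <= 1] in the Loewner order. *)
Definition dominated_form P :=
  P 0 1 = P 1 0 /\
  forall x, 0 <= qform P x /\ forall g, G g -> qform P (x *m g^T) <= qform 1%:M x.

Lemma closed_dominated_form : closed dominated_form.
Proof.
apply: closedI.
  exact: closed_eq_continuous (@coord_continuous R 2 2 0 1) (@coord_continuous R 2 2 1 0).
apply: closed_forall => x; apply: closedI.
  exact: continuous_closed_preimage (continuous_qform x) (@closed_ge _ 0).
apply: closed_forall_in => g _.
exact: continuous_closed_preimage (continuous_qform _) (@closed_le _ _).
Qed.

Lemma one_le_L : 1 <= L.
Proof. by have := G_bounded _ G1 0 0; rewrite mxE /= mulr1n expr1n. Qed.

Lemma dominated_form_entry_bound P : dominated_form P -> forall i j, `|P i j| <= 1.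
Proof.
move=> [sP KP] i j.
have qP a b : 0 <= qform P (row2 a b) <= qform 1%:M (row2 a b).
  by have [-> /(_ _ G1)] := KP (row2 a b); rewrite trmx1 mulmx1.
move: (qP 1 0) (qP 0 1) (qP 1 1) (qP 1 (-1)); rewrite !qform_row2 !mxE /= -sP.
move=> /andP[? ?] /andP[? ?] /andP[? ?] /andP[? ?].
by case: (ord2P i) => ->; case: (ord2P j) => ->;
  rewrite ?sP ler_norml; apply/andP; split; lra.
Qed.

Lemma dominated_form_midpoint {P Q} :
  dominated_form P -> dominated_form Q -> dominated_form (2^-1 *: (P + Q)).
Proof.
move=> [sP KP] [sQ KQ]; split; first by rewrite !mxE sP sQ.
move=> x; have [P0 Pg] := KP x; have [Q0 Qg] := KQ x.
split; first by rewrite qformZ qformD; lra.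
by move=> g Gg; rewrite qformZ qformD; have := Pg g Gg; have := Qg g Gg; lra.
Qed.

Lemma dominated_form_conj {h P} : G h -> dominated_form P -> dominated_form (h^T *m P *m h).
Proof.
move=> Gh [sP KP]; split; first by rewrite !mulmx2E !mxE sP; ring.
move=> x; rewrite qform_conj; split; first by case: (KP (x *m h^T)).
move=> g Gg; rewrite qform_conj -mulmxA -trmx_mul.
by have [_] := KP x; apply; apply: GM.
Qed.

Lemma dominated_form_scalar : dominated_form (4 * L)^-1%:M.
Proof.
have L1 := one_le_L; split; first by rewrite !mxE.
move=> x; rewrite -[_%:M]scalemx1; have q1x : 0 <= qform 1%:M x.
  by rewrite qformE !mxE /=; nra.
split=> [|g Gg]; rewrite qformZ; first by rewrite mulr_ge0 // invr_ge0; lra.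
rewrite ler_pdivrMl; last lra.
exact: qform1_mul_le (G_bounded _ Gg).
Qed.

Lemma dominated_form_pos_def {P} : dominated_form P -> 0 < \det P -> pos_def2 P.
Proof.
move=> [sP KP] dP; split=> //.
have P00 : 0 <= P 0 0.
  by have := (KP (row2 1 0)).1; rewrite qform_row2 expr1n expr0n /=; lra.
rewrite lt_neqAle P00 andbT; apply: contraTneq dP => P0.
by rewrite det_mx2 -sP -P0 mul0r sub0r oppr_gt0 -leNgt -expr2 sqr_ge0.
Qed.

Lemma invariant_form : exists P, pos_def2 P /\ forall h, G h -> h^T *m P *m h = P.
Proof.
have L1 := one_le_L.
have compactK : compact dominated_form.
  exact: subclosed_compact closed_dominated_form (compact_entry_bounded 1)
    dominated_form_entry_bound.
have [P KP Pmax] := compact_EVT_max (ex_intro _ _ dominated_form_scalar) compactK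
  (continuous_subspaceT continuous_det).
have {}Pmax Q : dominated_form Q -> \det Q <= \det P.
  by move=> KQ; apply: Pmax; rewrite inE.
rewrite inE in KP.
have dP : 0 < \det P.
  apply: lt_le_trans (Pmax _ dominated_form_scalar).
  by rewrite det_scalar exprn_gt0 // invr_gt0; lra.
have Ppd := dominated_form_pos_def KP dP.
exists P; split=> // h Gh.
have KW := dominated_form_conj Gh KP.
have dW : \det (h^T *m P *m h) = \det P.
  by rewrite !det_mulmx det_tr mulrAC -expr2 G_det ?mul1r.
apply: det_midpoint_le_eq; rewrite ?dW //.
- by apply: dominated_form_pos_def; rewrite ?dW.
- exact: Pmax (dominated_form_midpoint KW KP).
Qed.

End InvariantForm.

Lemma O2_conj_invariant {R : realType} {M g : 'M[R]_2} : M \in unitmx ->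
  g^T *m (M^T *m M) *m g = M^T *m M -> O2 (M *m g *m invmx M).
Proof.
move=> Mu gP; rewrite /O2 /=.
have -> : (M *m g *m invmx M)^T *m (M *m g *m invmx M) =
    (invmx M)^T *m (g^T *m (M^T *m M) *m g) *m invmx M by rewrite !trmx_mul !mulmxA.
by rewrite gP !mulmxA -trmx_mul mulmxV // trmx1 mul1mx mulmxV.
Qed.

Section Normalize.
Context {R : rcfType}.
Implicit Types X Y : 'M[R]_2.

Definition det_normalize X := (Num.sqrt `|\det X|)^-1 *: X.

Lemma det_normalize1 : det_normalize 1%:M = 1%:M.
Proof. by rewrite /det_normalize det1 normr1 sqrtr1 invr1 scale1r. Qed.

Lemma det_normalizeM X Y : det_normalize (X *m Y) = det_normalize X *m det_normalize Y.
Proof.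
rewrite /det_normalize det_mulmx normrM sqrtrM ?normr_ge0 // invfM.
by rewrite -scalemxAl -scalemxAr scalerA.
Qed.

Lemma sqr_det_det_normalize X : X \in unitmx -> \det (det_normalize X) ^+ 2 = 1.
Proof.
rewrite unitmxE unitfE -normr_gt0 => dX.
rewrite detZ exprVn sqr_sqrtr ?normr_ge0 // exprMn exprVn real_normK ?num_real //.
by rewrite mulVf // -real_normK ?num_real // gt_eqF ?exprn_gt0.
Qed.

Lemma det_normalize_entry_le K X i j : X \in unitmx ->
  X i j ^+ 2 <= K * `|\det X| -> det_normalize X i j ^+ 2 <= K.
Proof.
rewrite unitmxE unitfE -normr_gt0 => dX XK.
by rewrite mxE exprMn exprVn sqr_sqrtr ?normr_ge0 // mulrC ler_pdivrMr.
Qed.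

End Normalize.

Lemma scrR0_det_normalize_bounded {R : realType} {A : set 'M[R]_2} :
    A `<=` @GL2 R -> scrR A = set0 ->
  exists L, forall X, monoid_of A X -> forall i j, det_normalize X i j ^+ 2 <= L.
Proof.
move=> AG scrR0; set S := [set c *: B | c in [set: R] & B in semigroup_of A].
have coneS c X : S X -> S (c *: X).
  by move=> [a _ [B SB <-]]; exists (c * a) => //; exists B; rewrite ?scalerA.
have rank1_free X : closure S X -> \rank X != 1%N.
  by move=> SX; apply/negP => /eqP rX; have : scrR A X by []; rewrite scrR0.
have [K CK] := cone_entry_bound S coneS rank1_free.
exists (Num.max K 1) => X MX i j.
apply: det_normalize_entry_le; first exact: monoid_of_GL2 AG _ MX.
case: MX => [-> | SX].
  rewrite det1 normr1 mulr1 !mxE.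
  by case: (i == j); rewrite /= ?mulr1n ?mulr0n ?expr1n ?expr0n le_max ?lexx ?ler01 ?orbT.
have {}SX : S X by exists 1 => //; exists X; rewrite ?scale1r.
apply: le_trans (CK X SX i j) _.
by rewrite ler_wpM2r ?normr_ge0 ?le_max ?lexx.
Qed.

Theorem lemma3p1 (R : realType) (A : set 'M[R]_2) :
  A `<=` @GL2 R -> (scrR A = set0 <-> strongly_conformal A).
Proof.
move=> AG; split; last exact: strongly_conformal_scrR0.
move=> /(scrR0_det_normalize_bounded AG) [L GL].
set G := det_normalize @` monoid_of A.
have G1 : G 1%:M by exists 1%:M; [left | exact: det_normalize1].
have GM g h : G g -> G h -> G (g *m h).
  move=> [X MX <-] [Y MY <-]; rewrite -det_normalizeM.
  by exists (X *m Y) => //; apply: monoid_ofM.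
have Gdet g : G g -> \det g ^+ 2 = 1.
  by move=> [X MX <-]; apply/sqr_det_det_normalize/(monoid_of_GL2 AG).
have GL' g : G g -> forall i j, g i j ^+ 2 <= L by move=> [X MX <-]; apply: GL.
have [P [Ppd Pinv]] := invariant_form G L G1 GM Gdet GL'.
have [M [Mu MP]] := cholesky2 Ppd.
exists M; split=> // B AB; rewrite scalemxAl scalemxAr.
apply: O2_conj_invariant Mu _; rewrite MP; apply: Pinv.
by exists B => //; right; apply: sub_semigroup_of.
Qed.
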